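(* For any $\delta>0$ and $s\in\mathbb{N}$ there is $C>0$ such that for any $m,n$ with $n\ge s$ and any $\mathcal{F}\subset[m]^n$ with $\mu(\mathcal{F})\ge e^{-n/C}$, if $\mathbf{S}\in\binom{[n]}{s}$ and $\mathbf{x}\in[m]^{\mathbf{S}}$ are uniformly random, then $\Pr[\mu(\mathcal{F}_{\mathbf{S}\to\mathbf{x}})\ge(1-\delta)\mu(\mathcal{F})]\ge1-\delta$.
   Context: $\mu$ denotes the uniform probability measure on the relevant product space $[m]^I$. For $S\subset[n]$ and $x\in[m]^S$, $\mathcal{F}_{S\to x}=\{z\in[m]^{[n]\setminus S}:(z_S=x, z_{[n]\setminus S}=z)\in\mathcal{F}\}\subset[m]^{[n]\setminus S}$. *)

From HB Require Import structures.
From mathcomp Require Import all_boot all_order all_algebra.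
From mathcomp Require Import reals sequences exp.
Set Implicit Arguments. Unset Strict Implicit. Unset Printing Implicit Defensive.
Import Order.TTheory GRing.Theory Num.Theory.
Local Open Scope ring_scope.

Definition mu (R : realType) (T : finType) (A : {set T}) : R :=
  #|A|%:R / #|T|%:R.

Section Restr.
Variables (m n : nat) (S : {set 'I_n}).

Definition onS := {ffun {i : 'I_n | i \in S} -> 'I_m}.
Definition offS := {ffun {i : 'I_n | i \notin S} -> 'I_m}.

(* the point of [m]^n with z_S = x and z_{[n]\S} = z *)
Definition glue (x : onS) (z : offS) : {ffun 'I_n -> 'I_m} :=
  [ffun i => (if i \in S as b return (i \in S) = b -> 'I_m
              then fun h => x (exist _ i h)
              else fun h => z (exist _ i (negbT h))) erefl].

Definition restr (F : {set {ffun 'I_n -> 'I_m}}) (x : onS) : {set offS} :=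
  [set z : offS | glue x z \in F].
End Restr.

Definition prob_good (R : realType) (delta : R) (s m n : nat)
    (F : {set {ffun 'I_n -> 'I_m}}) : R :=
  (\sum_(S in [set S : {set 'I_n} | #|S| == s])
      mu R [set x : onS m S | (1 - delta) * mu R F <= mu R (restr F x)])
  / #|[set S : {set 'I_n} | #|S| == s]|%:R.

From HB Require Import structures.
From mathcomp Require Import all_boot all_order all_algebra.
From mathcomp Require Import reals sequences exp.
From mathcomp Require Import ring lra zify.
Set Implicit Arguments. Unset Strict Implicit. Unset Printing Implicit Defensive.
Import Order.TTheory GRing.Theory Num.Theory.
Local Open Scope ring_scope.

(* For w uniform on F, let info S be |F| times the Kullback-Leibler divergence
   of the law of w_S from the uniform law on [m]^S.  Since the mutual
   information of w_A and w_B is nonnegative, info is superadditive on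
   disjoint sets, so its average over s-subsets is at most 2s/n times
   info [n] = |F| ln (1/mu F) <= |F| n / C.  On the other hand
   mu(F_{S->x}) = r_x mu(F) where info S = |F| * E_x [r_x ln r_x - r_x + 1],
   and r ln r - r + 1 >= delta^2/4 whenever r <= 1 - delta, so by Markov's
   inequality few x have r_x < 1 - delta. *)

Lemma dep_if_true (b : bool) T (f : b = true -> T) (g : b = false -> T) (h : b = true) :
  (if b as c return (b = c -> T) then f else g) (erefl b) = f h.
Proof. by case: b f g h => // f g h; congr f; apply: eq_irrelevance. Qed.

Lemma dep_if_false (b : bool) T (f : b = true -> T) (g : b = false -> T) (h : b = false) :
  (if b as c return (b = c -> T) then f else g) (erefl b) = g h.
Proof. by case: b f g h => // f g h; congr g; apply: eq_irrelevance. Qed.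

Section Projections.
Variables (m n : nat) (S : {set 'I_n}).
Implicit Types (w : {ffun 'I_n -> 'I_m}) (x : onS m S) (z : offS m S).

Definition projS w : onS m S := [ffun i => w (val i)].
Definition projC w : offS m S := [ffun i => w (val i)].

Lemma glue_in x z i (iS : i \in S) : glue x z i = x (exist _ i iS).
Proof. by rewrite ffunE (dep_if_true _ _ iS). Qed.

Lemma glue_out x z i (iS : i \notin S) : glue x z i = z (exist _ i iS).
Proof. by rewrite ffunE (dep_if_false _ _ (negbTE iS)); congr (z _); apply: val_inj. Qed.

Lemma projS_glue x z : projS (glue x z) = x.
Proof. by apply/ffunP => -[i iS]; rewrite ffunE /= (glue_in _ _ iS); congr (x _); apply: val_inj. Qed.

Lemma projC_glue x z : projC (glue x z) = z.
Proof. by apply/ffunP => -[i iS]; rewrite ffunE /= (glue_out _ _ iS); congr (z _); apply: val_inj. Qed.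

Lemma glue_proj w : glue (projS w) (projC w) = w.
Proof.
apply/ffunP => i; have [iS | iS] := boolP (i \in S).
  by rewrite (glue_in _ _ iS) ffunE.
by rewrite (glue_out _ _ iS) ffunE.
Qed.

Lemma eq_projS w w' : (projS w == projS w') = [forall i in S, w i == w' i].
Proof.
apply/eqP/forall_inP => [e i iS | e].
  by have := congr1 (fun x : onS m S => x (exist _ i iS)) e; rewrite !ffunE => ->.
by apply/ffunP => -[i iS]; rewrite !ffunE; apply/eqP/e.
Qed.

Lemma card_onS : #|onS m S| = (m ^ #|S|)%N.
Proof. by rewrite card_ffun card_ord card_sig; congr (_ ^ _)%N; apply: eq_card. Qed.

Lemma card_offS : #|offS m S| = (m ^ (n - #|S|))%N.
Proof.
rewrite card_ffun card_ord card_sig; congr (_ ^ _)%N.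
have -> : #|[pred i | i \notin S]| = #|~: S| by apply: eq_card => i; rewrite !inE.
by have := cardsC S; rewrite card_ord; lia.
Qed.

End Projections.

Lemma eq_projSU m n (A B : {set 'I_n}) (w w' : {ffun 'I_n -> 'I_m}) :
  (projS (A :|: B) w == projS (A :|: B) w') =
  (projS A w == projS A w') && (projS B w == projS B w').
Proof.
rewrite !eq_projS; apply/forall_inP/andP => [e | [/forall_inP eA /forall_inP eB] i].
  by split; apply/forall_inP => i iS; apply: e; rewrite inE iS ?orbT.
by rewrite inE => /orP[/eA | /eB].
Qed.

Section Fibers.
Variables (m n : nat) (F : {set {ffun 'I_n -> 'I_m}}).
Implicit Types (S : {set 'I_n}) (w : {ffun 'I_n -> 'I_m}).

Definition fiber S w := [set w' in F | projS S w' == projS S w].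

Lemma card_projS_fiber S (x : onS m S) : #|[set w in F | projS S w == x]| = #|restr F x|.
Proof.
rewrite -(card_imset _ (can_inj (projC_glue x))).
apply: eq_card => w; rewrite !inE; apply/andP/imsetP => [[wF /eqP <-] | [z]].
  by exists (projC S w); rewrite ?inE glue_proj.
by rewrite inE => zF ->; rewrite zF projS_glue.
Qed.

Lemma card_fiber S w : #|fiber S w| = #|restr F (projS S w)|.
Proof. exact: card_projS_fiber. Qed.

Lemma fiber_gt0 S w : w \in F -> (0 < #|fiber S w|)%N.
Proof. by move=> wF; apply/card_gt0P; exists w; rewrite inE wF /=. Qed.

Lemma sum_projS (R : nmodType) S (g : onS m S -> R) :
  \sum_(w in F) g (projS S w) = \sum_(x : onS m S) g x *+ #|restr F x|.
Proof.
rewrite (partition_big (projS S) predT) //=; apply: eq_bigr => x _.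
rewrite (eq_bigr (fun _ => g x)) => [|w /andP[_ /eqP ->] //].
by rewrite sumr_const -card_projS_fiber; congr (_ *+ _); apply: eq_card => w; rewrite !inE.
Qed.

Variable R : numFieldType.

Lemma sum_inv_card_fiber_le1 S (x : onS m S) :
  \sum_(w in F | projS S w == x) (#|fiber S w|%:R)^-1 <= 1 :> R.
Proof.
set N := #|[set w in F | projS S w == x]|.
rewrite (eq_bigr (fun _ => (N%:R)^-1)) => [|w /andP[_ /eqP xw]]; last by rewrite /fiber xw.
rewrite sumr_const; have -> : #|(fun w => (w \in F) && (projS S w == x))| = N.
  by apply: eq_card => w; rewrite !inE.
have [-> | N0] := posnP N; first by rewrite mulr0n.
by rewrite -[X in X <= _]mulr_natr mulVf // pnatr_eq0 -lt0n.
Qed.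

Lemma sum_fiber_ratio_le A B :
  \sum_(w in F) (#|fiber A w| * #|fiber B w|)%:R / #|fiber (A :|: B) w|%:R
    <= #|F|%:R ^+ 2 :> R.
Proof.
pose agree a b w := (projS A w == projS A a) && (projS B w == projS B b).
(* The w agreeing with a on A and with b on B lie in a single (A :|: B)-fiber. *)
have pair_le1 a b : \sum_(w in F) (agree a b w)%:R / #|fiber (A :|: B) w|%:R <= 1 :> R.
  have [E0 | [w0]] := set_0Vmem [set w in F | agree a b w].
    rewrite big1 // => w wF; suff /negbTE-> : ~~ agree a b w by rewrite mul0r.
    by apply/negP => abw; have := in_set0 w; rewrite -E0 inE wF abw.
  rewrite inE => /andP[_ abw0].
  apply: le_trans (sum_inv_card_fiber_le1 (projS (A :|: B) w0)).
  rewrite [X in _ <= X]big_mkcondr /=; apply: ler_sum => w _.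
  have [abw | _] := boolP (agree a b w); last by rewrite mul0r; case: ifP; rewrite ?invr_ge0.
  have -> : projS (A :|: B) w == projS (A :|: B) w0.
    move: abw abw0; rewrite eq_projSU /agree => /andP[/eqP-> /eqP->] /andP[/eqP-> /eqP->].
    by rewrite !eqxx.
  by rewrite mul1r.
have cardE S w : #|fiber S w|%:R = \sum_(a in F) (projS S w == projS S a)%:R :> R.
  rewrite -sum1_card (eq_bigl (fun a => (a \in F) && (projS S a == projS S w))) => [|a].
    by rewrite big_mkcondr natr_sum /=; apply: eq_bigr => a _; rewrite eq_sym; case: eqP.
  by rewrite inE.
apply: (@le_trans _ _ (\sum_(a in F) \sum_(b in F) 1)); last first.
  by rewrite !sumr_const -mulrnA mulnn natrX.
rewrite (eq_bigr (fun w => \sum_(a in F) \sum_(b in F)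
    (agree a b w)%:R / #|fiber (A :|: B) w|%:R)) => [|w _]; last first.
  rewrite natrM (cardE A) (cardE B) big_distrlr mulr_suml; apply: eq_bigr => a _.
  by rewrite mulr_suml; apply: eq_bigr => b _; rewrite /= -natrM mulnb.
rewrite exchange_big; apply: ler_sum => a _.
by rewrite exchange_big; apply: ler_sum => b _; apply: pair_le1.
Qed.

End Fibers.

Section KullbackLeibler.
Variable R : realType.
Implicit Types r t x : R.

Lemma ln_le_subr1 x : 0 < x -> ln x <= x - 1.
Proof. by move=> x0; have := @le_ln1Dx R (x - 1); rewrite subrKC; apply; rewrite ltrBrDl addrN. Qed.

Lemma le_xlnx r t : 0 < r -> 0 < t -> r * ln t + r - t <= r * ln r.
Proof.
move=> r0 t0; have := ln_le_subr1 (divr_gt0 t0 r0).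
rewrite ln_div ?posrE // -(ler_pM2l r0) mulrBr mulrBr mulr1 mulrCA divff ?gt_eqF // mulr1.
lra.
Qed.

Definition kl_fun r := r * ln r - r + 1.

Lemma kl_fun_ge0 r : 0 <= r -> 0 <= kl_fun r.
Proof.
rewrite /kl_fun le_eqVlt => /predU1P[<- | r0]; first by rewrite mul0r subr0 add0r.
by have := le_xlnx r0 ltr01; rewrite ln1 mulr0 add0r; lra.
Qed.

(* Compare r ln r with its tangent at t = 1 - d/2. *)
Lemma kl_fun_ge d r : 0 < d < 1 -> 0 <= r <= 1 - d -> d ^+ 2 / 4 <= kl_fun r.
Proof.
move=> /andP[d0 d1] /andP[]; rewrite /kl_fun le_eqVlt => /predU1P[<- | r0] r1d.
  by rewrite mul0r subr0 add0r ler_pdivrMr //; nra.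
set t := 1 - d / 2; have t0 : 0 < t by rewrite /t; lra.
have ln_t_le0 : ln t <= 0 by apply: ln_le0; rewrite /t; lra.
have ln_t_ge : 1 - t^-1 <= ln t.
  by have := @ln_le_subr1 t^-1; rewrite invr_gt0 lnV ?posrE // => /(_ t0); lra.
have e1 : (1 - d) * ln t <= r * ln t by rewrite ler_wnM2r.
have e2 : (1 - d) * (1 - t^-1) <= (1 - d) * ln t by rewrite ler_wpM2l //; lra.
have e3 : (1 - d) * t^-1 <= t - d ^+ 2 / 4 by rewrite ler_pdivrMr // /t; nra.
by have := le_xlnx r0 t0; rewrite /t in e3 *; lra.
Qed.

End KullbackLeibler.

Section Information.
Variables (R : realType) (m n : nat) (F : {set {ffun 'I_n -> 'I_m}}).
Hypothesis F_gt0 : (0 < #|F|)%N.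
Implicit Types S A B : {set 'I_n}.

Local Notation f := (#|F|%:R : R).
Local Notation M S := ((m ^ #|S|)%:R : R).

Let f_gt0 : 0 < f. Proof. by rewrite ltr0n. Qed.

(* [density x] = mu(F_{S->x}) / mu(F), see [mu_restr]. *)
Definition density S (x : onS m S) : R := #|restr F x|%:R * M S / f.

Definition info S : R := \sum_(w in F) ln (density (projS S w)).

Lemma m_pow_gt0 k : (k <= n)%N -> (0 < m ^ k)%N.
Proof.
case/card_gt0P: F_gt0 => w _ kn; rewrite expn_gt0 orbC; case: k kn => //= k kn.
by case: (w (Ordinal kn)) => i; case: m.
Qed.

Lemma m_pow_card_gt0 S : (0 < m ^ #|S|)%N.
Proof. by apply: m_pow_gt0; rewrite -[n in (_ <= n)%N]card_ord max_card. Qed.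

Lemma density_gt0 S w : w \in F -> 0 < density (projS S w).
Proof.
by move=> wF; rewrite /density -card_fiber divr_gt0 ?mulr_gt0 ?ltr0n ?fiber_gt0 ?m_pow_card_gt0.
Qed.

Lemma mu_restr S (x : onS m S) : mu R (restr F x) = density x * mu R F.
Proof.
have Sn : (#|S| <= n)%N by rewrite -[n in (_ <= n)%N]card_ord max_card.
have split_n : (m ^ n = m ^ #|S| * m ^ (n - #|S|))%N by rewrite -expnD subnKC.
rewrite /mu /density card_offS card_ffun !card_ord split_n natrM.
by field; rewrite !pnatr_eq0 -!lt0n F_gt0 m_pow_card_gt0 m_pow_gt0 ?leq_subr.
Qed.

Lemma info_superadd A B : [disjoint A & B] -> info A + info B <= info (A :|: B).
Proof.
move=> dAB; have cardU : #|A :|: B| = (#|A| + #|B|)%N.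
  by rewrite cardsU (disjoint_setI0 dAB) cards0 subn0.
rewrite -subr_le0 /info -big_split -sumrB /=.
apply: le_trans (_ : \sum_(w in F) ((#|fiber F A w| * #|fiber F B w|)%:R
    / #|fiber F (A :|: B) w|%:R / f - 1) <= 0).
  apply: ler_sum => w wF.
  have dpos S : 0 < density (projS S w) by apply: density_gt0.
  rewrite -lnM ?posrE // -ln_div ?posrE ?(mulr_gt0 (dpos A) (dpos B)) //.
  have -> : density (projS A w) * density (projS B w) / density (projS (A :|: B) w)
      = (#|fiber F A w| * #|fiber F B w|)%:R / #|fiber F (A :|: B) w|%:R / f.
    rewrite /density -!card_fiber cardU expnD !natrM; field.
    by rewrite !pnatr_eq0 -!lt0n F_gt0 !m_pow_card_gt0 fiber_gt0.
  by apply: ln_le_subr1; rewrite !divr_gt0 ?ltr0n ?muln_gt0 ?fiber_gt0.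
rewrite big_split sumrN sumr_const /= -mulr_suml subr_le0 ler_pdivrMr //.
by rewrite -expr2 -mulr_natl mulr1; apply: sum_fiber_ratio_le.
Qed.

Lemma sum_card_restr S : \sum_(x : onS m S) #|restr F x|%:R = f.
Proof.
have := sum_projS F (fun _ : onS m S => 1 : R); rewrite sumr_const => ->.
by apply: eq_bigr.
Qed.

Lemma info_kl S : info S = f / M S * \sum_(x : onS m S) kl_fun (density x).
Proof.
have M0 : 0 < M S by rewrite ltr0n m_pow_card_gt0.
have sum_density : \sum_(x : onS m S) density x = M S.
  by rewrite -mulr_suml -mulr_suml sum_card_restr; field; rewrite gt_eqF.
have sum_one : \sum_(x : onS m S) (1 : R) = M S by rewrite sumr_const card_onS.
rewrite /kl_fun !big_split /= sumrN sum_density sum_one subrK /info.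
rewrite (sum_projS F (fun x : onS m S => ln (density x))) mulr_sumr.
by apply: eq_bigr => x _; rewrite /density -mulr_natl; field; rewrite !gt_eqF.
Qed.

Lemma info_ge0 S : 0 <= info S.
Proof.
rewrite info_kl mulr_ge0 ?divr_ge0 ?ler0n // sumr_ge0 // => x _.
by apply: kl_fun_ge0; rewrite /density divr_ge0 ?mulr_ge0 ?ler0n.
Qed.

Lemma info_setT : info setT = f * ln (mu R F)^-1.
Proof.
rewrite /info (eq_bigr (fun _ => ln (mu R F)^-1)) ?sumr_const ?mulr_natl // => w wF.
rewrite /density; have -> : #|restr F (projS setT w)| = 1%N.
  rewrite -card_fiber -(cards1 w); apply: eq_card => w'; rewrite !inE eq_projS.
  apply/andP/eqP => [[_ /forall_inP e] | ->]; last by rewrite wF; split=> //; apply/forall_inP.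
  by apply/ffunP => i; apply/eqP/e; rewrite inE.
by rewrite /mu invf_div mul1r cardsT card_ffun !card_ord.
Qed.

Lemma mu_good_ge d S : 0 < d < 1 ->
  1 - 4 / d ^+ 2 * (info S / f) <=
  mu R [set x : onS m S | (1 - d) * mu R F <= mu R (restr F x)].
Proof.
move=> /andP[d0 d1]; have M0 : 0 < M S by rewrite ltr0n m_pow_card_gt0.
have muF0 : 0 < mu R F.
  by rewrite /mu divr_gt0 ?ltr0n // card_ffun !card_ord m_pow_gt0.
set bad := [set x : onS m S | density x < 1 - d].
have -> : [set x : onS m S | (1 - d) * mu R F <= mu R (restr F x)] = ~: bad.
  by apply/setP => x; rewrite !inE mu_restr ler_pM2r // leNgt.
have bad_le : #|bad|%:R * (d ^+ 2 / 4) <= \sum_(x : onS m S) kl_fun (density x).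
  rewrite (bigID (mem bad)) /= -[X in X <= _]addr0 lerD ?sumr_ge0 // => [|x _]; last first.
    by apply: kl_fun_ge0; rewrite /density divr_ge0 ?mulr_ge0 ?ler0n.
  rewrite mulr_natl -sumr_const; apply: ler_sum => x; rewrite inE => xbad.
  apply: (kl_fun_ge (d := d)); first by rewrite d0 d1.
  by rewrite (ltW xbad) andbT /density divr_ge0 ?mulr_ge0 ?ler0n.
have card_good : #|~: bad| = (m ^ #|S| - #|bad|)%N by rewrite -card_onS -(cardsC bad) addKn.
rewrite /mu card_good card_onS natrB; last by rewrite -card_onS max_card.
rewrite mulrBl divff ?gt_eqF // lerD2l lerN2.
have -> : info S / f = (\sum_(x : onS m S) kl_fun (density x)) / M S.
  by rewrite info_kl; field; rewrite !gt_eqF.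
rewrite mulrA ler_pM2r ?invr_gt0 // -invf_div mulrC ler_pdivlMr //.
by rewrite divr_gt0 ?exprn_gt0.
Qed.

End Information.

Lemma bin_mul_bin_sub n a b : (a + b <= n)%N ->
  ('C(n, a) * 'C(n - a, b) = 'C(n, a + b) * 'C(a + b, a))%N.
Proof.
move=> abn; have an : (a <= n)%N by lia.
have bna : (b <= n - a)%N by lia.
have fact_pos : (0 < a`! * b`! * (n - (a + b))`!)%N by rewrite !muln_gt0 !fact_gt0.
apply/eqP; rewrite -(eqn_pmul2r fact_pos); apply/eqP.
have := bin_fact (leq_addr b a); rewrite addKn => fact_ab.
transitivity ('C(n, a) * (a`! * ('C(n - a, b) * (b`! * (n - a - b)`!))))%N.
  by rewrite subnDA; ring.
by rewrite (bin_fact bna) (bin_fact an) -(bin_fact abn) -fact_ab; ring.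
Qed.

Section SuperadditiveAverage.
Variables (R : realFieldType) (n : nat) (L : {set 'I_n} -> R).
Implicit Types S A B : {set 'I_n}.
Hypothesis L_ge0 : forall S, 0 <= L S.
Hypothesis L_superadd : forall A B, [disjoint A & B] -> L A + L B <= L (A :|: B).

Local Notation ksub k := [set S : {set 'I_n} | #|S| == k].
Local Notation ksub_disj S k := [set T : {set 'I_n} | [disjoint S & T] & #|T| == k].

Definition ksum k := \sum_(S in ksub k) L S.
Definition avg k := ksum k / 'C(n, k)%:R.

Lemma card_ksub_disj S k : #|ksub_disj S k| = 'C(n - #|S|, k).
Proof.
have cardC : #|~: S| = (n - #|S|)%N by have := cardsC S; rewrite card_ord; lia.
rewrite -cardC -cards_draws; apply: eq_card => T.
by rewrite !inE disjoint_sym disjoints_subset.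
Qed.

Lemma sum_ksub_disj_swap (G : {set 'I_n} -> {set 'I_n} -> R) s t :
  \sum_(S in ksub s) \sum_(T in ksub_disj S t) G S T =
  \sum_(T in ksub t) \sum_(S in ksub_disj T s) G S T.
Proof.
rewrite (exchange_big_dep (mem (ksub t))) /= => [|S T _]; last by rewrite !inE => /andP[].
apply: eq_bigr => T; rewrite inE => Tt; apply: eq_bigl => S.
by rewrite !inE Tt andbT disjoint_sym andbC.
Qed.

Lemma sum_ksub_disj_fst s t :
  \sum_(S in ksub s) \sum_(T in ksub_disj S t) L S = 'C(n - s, t)%:R * ksum s.
Proof.
rewrite /ksum mulr_sumr; apply: eq_bigr => S; rewrite inE => /eqP Ss.
by rewrite sumr_const card_ksub_disj Ss mulr_natl.
Qed.

Lemma sum_ksub_disj_snd s t :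
  \sum_(S in ksub s) \sum_(T in ksub_disj S t) L T = 'C(n - t, s)%:R * ksum t.
Proof. by rewrite (sum_ksub_disj_swap (fun _ T => L T)) sum_ksub_disj_fst. Qed.

Lemma sum_ksub_disj_union s t :
  \sum_(S in ksub s) \sum_(T in ksub_disj S t) L (S :|: T) =
  'C(s + t, s)%:R * ksum (s + t)%N.
Proof.
have reindex S : #|S| = s -> \sum_(T in ksub_disj S t) L (S :|: T) =
    \sum_(U in ksub (s + t)%N | S \subset U) L U.
  move=> Ss; rewrite [RHS](reindex_onto (setU S) (fun U => U :\: S)) /=; last first.
    by move=> U /andP[_ SU]; rewrite setDE setUIr setUCr setIT; apply/setUidPr.
  apply: eq_bigl => T; rewrite !inE subsetUl andbT setDUl setDv set0U.
  have [dST | ndST] := boolP [disjoint S & T].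
    have -> : T :\: S = T by apply/setDidPl; rewrite disjoint_sym.
    by rewrite eqxx andbT cardsU (disjoint_setI0 dST) cards0 subn0 Ss eqn_add2l.
  apply/esym/negbTE; apply: contra ndST => /andP[_ /eqP TS].
  by rewrite -TS disjoint_sym disjoints_subset setDE subsetIr.
transitivity (\sum_(S in ksub s) \sum_(U in ksub (s + t)%N | S \subset U) L U).
  by apply: eq_bigr => S; rewrite inE => /eqP /reindex.
rewrite (exchange_big_dep (mem (ksub (s + t)%N))) /= => [|S U _ /andP[] //].
rewrite /ksum mulr_sumr; apply: eq_bigr => U; rewrite inE => /eqP Ust.
rewrite (eq_bigl (mem [set S : {set 'I_n} | S \subset U & #|S| == s])) => [|S].
  by rewrite sumr_const cards_draws Ust mulr_natl.
by rewrite !inE Ust eqxx andbC.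
Qed.
(* Double counting of the C(n,s) C(n-s,t) = C(n,t) C(n-t,s) = C(n,s+t) C(s+t,s)
   disjoint pairs (S, T) with |S| = s and |T| = t. *)
Lemma avg_superadd s t : (s + t <= n)%N -> avg s + avg t <= avg (s + t)%N.
Proof.
move=> stn.
have pairs : 'C(n - s, t)%:R * ksum s + 'C(n - t, s)%:R * ksum t <=
    'C(s + t, s)%:R * ksum (s + t)%N.
  rewrite -sum_ksub_disj_fst -sum_ksub_disj_snd -sum_ksub_disj_union -big_split /=.
  apply: ler_sum => S _; rewrite -big_split /=; apply: ler_sum => T.
  by rewrite inE => /andP[dST _]; apply: L_superadd.
set N := ('C(n, s) * 'C(n - s, t))%N.
have N_gt0 : (0 < N)%N by rewrite muln_gt0 !bin_gt0; lia.
have avgE k c : (k <= n)%N -> ('C(n, k) * c = N)%N -> avg k = c%:R * ksum k / N%:R.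
  move=> kn ckN; have c0 : (0 < c)%N by move: N_gt0; rewrite -ckN muln_gt0 => /andP[].
  by rewrite /avg -ckN natrM; field; rewrite !pnatr_eq0 -!lt0n bin_gt0 kn c0.
rewrite (avgE s ('C(n - s, t))) ?(avgE t ('C(n - t, s))) ?(avgE (s + t)%N ('C(s + t, s))) //;
  try lia.
- by rewrite -mulrDl ler_pM2r ?invr_gt0 ?ltr0n.
- by rewrite /N bin_mul_bin_sub.
rewrite /N bin_mul_bin_sub 1?addnC ?bin_mul_bin_sub //; try lia.
by have := bin_sub (leq_addr t s); rewrite addKn => ->.
Qed.

Lemma avg_ge0 k : 0 <= avg k.
Proof. by rewrite /avg divr_ge0 ?ler0n // sumr_ge0. Qed.

Lemma avg_n : avg n = L setT.
Proof.
rewrite /avg binn divr1 /ksum (big_pred1 setT) // => S.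
by rewrite !inE eqEcard subsetT cardsT card_ord eqn_leq -[n in (_ <= n)%N]card_ord max_card.
Qed.

Lemma avg_mul k s : (k * s <= n)%N -> k%:R * avg s <= avg (k * s)%N.
Proof.
elim: k => [|k IH] ksn; first by rewrite mul0r avg_ge0.
rewrite mulSn addnC -natr1 mulrDl mul1r.
by apply: (le_trans _ (avg_superadd _)); rewrite ?lerD2r ?IH //; lia.
Qed.

Lemma avg_le_avg_n k : (k <= n)%N -> avg k <= avg n.
Proof.
move=> kn; have := @avg_superadd k (n - k); rewrite subnKC // => /(_ (leqnn n)).
by apply: le_trans; rewrite lerDl avg_ge0.
Qed.

Lemma avg_le s : (s <= n)%N -> avg s <= 2 * s%:R / n%:R * L setT.
Proof.
move=> sn; have [-> | s_gt0] := posnP s.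
  by have := @avg_superadd 0 0 (leq0n n); rewrite mulr0n mulr0 !mul0r; lra.
set k := (n %/ s)%N.
have ks_n : (k * s <= n)%N by apply: leq_divM.
have n_lt : (n < k.+1 * s)%N by apply: ltn_ceil.
have k_gt0 : (0 < k)%N by rewrite divn_gt0.
have n_le : (n <= 2 * (k * s))%N by nia.
rewrite mulrAC ler_pdivlMr ?ltr0n; last by lia.
apply: (@le_trans _ _ (avg s * (2 * (k * s))%:R)); first by rewrite ler_wpM2l ?avg_ge0 ?ler_nat.
have -> : avg s * (2 * (k * s))%:R = 2 * s%:R * (k%:R * avg s) by rewrite !natrM; ring.
rewrite ler_pM2l ?mulr_gt0 ?ltr0n // -avg_n.
exact: le_trans (avg_mul ks_n) (avg_le_avg_n ks_n).
Qed.

End SuperadditiveAverage.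

Section ProbGood.
Variables (R : realType) (d : R) (s m n : nat) (F : {set {ffun 'I_n -> 'I_m}}).
Hypotheses (d_bounds : 0 < d < 1) (F_gt0 : (0 < #|F|)%N) (sn : (s <= n)%N).

Let d_gt0 : 0 < d. Proof. by case/andP: d_bounds. Qed.

Lemma prob_good_ge_avg : 1 - 4 / d ^+ 2 * (avg (info R F) s / #|F|%:R) <= prob_good d s F.
Proof.
have card_ksub : #|[set S : {set 'I_n} | #|S| == s]| = 'C(n, s) by rewrite card_draws card_ord.
rewrite /prob_good card_ksub ler_pdivlMr ?ltr0n ?bin_gt0 //.
apply: le_trans (ler_sum _ _) => [|S _]; last exact: mu_good_ge.
rewrite sumrB sumr_const card_ksub -mulr_sumr -mulr_suml /avg /ksum.
by rewrite le_eqVlt; apply/predU1P; left; field; rewrite !gt_eqF ?ltr0n ?bin_gt0.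
Qed.

Lemma prob_good_ge : 1 - 8 * s%:R / (d ^+ 2 * n%:R) * ln (mu R F)^-1 <= prob_good d s F.
Proof.
apply: le_trans prob_good_ge_avg; rewrite lerD2l lerN2.
have f_gt0 : 0 < #|F|%:R :> R by rewrite ltr0n.
have := avg_le (info_ge0 R F_gt0) (info_superadd R F_gt0) sn; rewrite info_setT // => avg_le_ln.
apply: le_trans (_ : 4 / d ^+ 2 * (2 * s%:R / n%:R * (#|F|%:R * ln (mu R F)^-1) / #|F|%:R) <= _).
  by rewrite ler_wpM2l ?divr_ge0 ?exprn_ge0 ?ler0n ?(ltW d_gt0) // ler_pM2r ?invr_gt0.
rewrite [#|F|%:R * _]mulrC [_ * (_ * #|F|%:R)]mulrA mulfK ?gt_eqF // [(d ^+ 2 * _)^-1]invfM.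
by rewrite le_eqVlt; apply/predU1P; left; move: (d ^+ 2)^-1 (n%:R)^-1 => a b; ring.
Qed.

End ProbGood.

Unset Implicit Arguments.
Theorem proposition6p1 (R : realType) (delta : R) (s : nat) :
  0 < delta ->
  exists C : R, 0 < C /\
    forall (m n : nat) (F : {set {ffun 'I_n -> 'I_m}}),
      (s <= n)%N ->
      expR (- (n%:R / C)) <= mu R F ->
      1 - delta <= prob_good delta s F.
Proof.
move=> delta_gt0; have [delta_ge1 | delta_lt1] := leP 1 delta.
  exists 1; split=> // m n F _ _; apply: le_trans (_ : 0 <= _); first lra.
  by rewrite divr_ge0 ?ler0n ?sumr_ge0 // => S _; rewrite divr_ge0 ?ler0n.
(* so that 8 s / (delta^2 C) = delta s / s.+1 *)
pose C := 8 * s.+1%:R / delta ^+ 3.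
have C_gt0 : 0 < C by rewrite divr_gt0 ?mulr_gt0 ?exprn_gt0 ?ltr0n.
exists C; split=> // m n F sn muF_ge.
have muF_gt0 : 0 < mu R F := lt_le_trans (expR_gt0 _) muF_ge.
have F_gt0 : (0 < #|F|)%N by rewrite lt0n; apply: contraTneq muF_gt0 => F0; rewrite /mu F0 mul0r ltxx.
have ln_muF_le : ln (mu R F)^-1 <= n%:R / C.
  by move: muF_ge; rewrite -ler_ln ?posrE ?expR_gt0 // expRK lnV ?posrE //; lra.
apply: le_trans (prob_good_ge _ F_gt0 sn); last by rewrite delta_gt0 delta_lt1.
rewrite lerD2l lerN2; have [-> | s_gt0] := posnP s; first by rewrite mulr0n mulr0 !mul0r ltW.
apply: le_trans (ler_wpM2l _ ln_muF_le) _.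
  by rewrite divr_ge0 ?mulr_ge0 ?exprn_ge0 ?ler0n ?(ltW delta_gt0).
have -> : 8 * s%:R / (delta ^+ 2 * n%:R) * (n%:R / C) = delta * (s%:R / s.+1%:R).
  by rewrite /C; field; rewrite addrC natr1 !gt_eqF ?ltr0n //; lia.
by rewrite ger_pMr // ler_pdivrMr ?ltr0n // mul1r ler_nat.
Qed.
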